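(* Let $q$ be a fixed prime power and $0<k<n$. Given an integer $i$ with $0\le i<\left[\begin{smallmatrix} n\\ k\end{smallmatrix}\right]_q$, Encoding Algorithm C (which produces the subspace $X\in\mathcal{G}_q(n,k)$ with $\mathrm{Ind}_{\mathcal{F}}(X)=i$) can be carried out with $O(k^{5/2}(n-k)^{5/2})$ operations on $q$-ary digits.
   Context: $\mathcal{G}_q(n,k)$ is the set of $k$-dimensional subspaces of $\mathbb{F}_q^n$ (field elements identified with $\mathbb{Z}_q$); $\left[\begin{smallmatrix} n\\ k\end{smallmatrix}\right]_q=\prod_{i=0}^{k-1}\frac{q^{n-i}-1}{q^{k-i}-1}$. A subspace $X$ is described by its Ferrers tableaux form $\mathcal{F}(X)$: from the unique $k\times n$ reduced row echelon matrix whose rows span $X$, delete in each row the leading one and everything to its left, and delete the columns containing leading ones, right-justifying the remaining entries. Its Ferrers diagram $\mathcal{F}_X$ (dots in place of entries) is represented as $(\mathcal{F}_{n-k},\dots,\mathcal{F}_1)$, $\mathcal{F}_i$ = number of dots in the $i$-th column from the right, $0\le\mathcal{F}_{i+1}\le\mathcal{F}_i\le k$; $|\mathcal{F}_X|$ is the number of dots. The entries vector $x$ lists entries of $\mathcal{F}(X)$ right to left, top to bottom, $\{x\}=\sum_t x_tq^{|\mathcal{F}_X|-t}$. $p(a,\eta,s)$ is the number of partitions of $s$ fitting in an $a\times\eta$ box; $\alpha_s=p(k,n-k,s)$. Among diagrams of size $m$, $\mathcal{F}<\widetilde{\mathcal{F}}$ if $\mathcal{F}_i>\widetilde{\mathcal{F}}_i$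 at the least $i$ where they differ; $\mathrm{ind}_m(\mathcal{F})$ is the number of size-$m$ diagrams in a $k\times(n-k)$ box preceding $\mathcal{F}$, and $\mathrm{ind}_m^{-1}$ is its inverse, computed by Algorithm B: with $N_m(\mathcal{F}_j,\dots,\mathcal{F}_1)=p(\mathcal{F}_j,n-k-j,m-\sum_{t\le j}\mathcal{F}_t)$ and $\mathcal{F}_0=k$, $h=$ given index, for $j=1,\dots,n-k$: if $\sum_{t<j}\mathcal{F}_t=m$ set $\mathcal{F}_j=0$; otherwise set $\ell=0$ and while $h\ge N_m(\mathcal{F}_{j-1}-\ell,\mathcal{F}_{j-1},\dots,\mathcal{F}_1)$ replace $h$ by $h-N_m(\mathcal{F}_{j-1}-\ell,\mathcal{F}_{j-1},\dots,\mathcal{F}_1)$ and $\ell$ by $\ell+1$; then set $\mathcal{F}_j=\mathcal{F}_{j-1}-\ell$. Encoding Algorithm C: set $i_0=i$; for $j=0,\dots,k(n-k)$, with $m=k(n-k)-j$: if $i_j<\alpha_mq^m$, set $|\mathcal{F}_X|=m$, $\mathcal{F}_X=\mathrm{ind}_m^{-1}(\lfloor i_j/q^m\rfloor)$, let $x$ be the base-$q$ representation (length $m$) of $i_j-\lfloor i_j/q^m\rfloor q^m$, and stop; otherwise set $i_{j+1}=i_j-\alpha_mq^m$. Complexity counts operations on $q$-ary digits; multiplication by $q^i$ is a shift. *)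

From mathcomp Require Import all_boot.
Set Implicit Arguments. Unset Strict Implicit. Unset Printing Implicit Defensive.

Definition prime_power (q : nat) : Prop :=
  exists p e : nat, prime p /\ 0 < e /\ q = p ^ e.

Definition gauss_binom (q n k : nat) : nat :=
  (\prod_(i < k) (q ^ (n - i) - 1)) %/ (\prod_(i < k) (q ^ (k - i) - 1)).

(* p(a, eta, s): number of partitions of s fitting in an a x eta box,
   defined by the standard recurrence
   p(a,eta,s) = p(a-1,eta,s) + [a <= s] p(a,eta-1,s-a),  p(0,_,s) = p(_,0,s) = [s = 0]. *)
Fixpoint pbox (a : nat) : nat -> nat -> nat :=
  match a with
  | 0 => fun _ s => nat_of_bool (s == 0)
  | a'.+1 => fix g (eta s : nat) {struct eta} : nat :=
      match eta with
      | 0 => nat_of_bool (s == 0)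
      | eta'.+1 => pbox a' eta s + (if a <= s then g eta' (s - a) else 0)
      end
  end.

Definition qdigits (q x : nat) : nat := if x == 0 then 1 else (trunc_log q x).+1.

(* cost of an addition / subtraction / comparison of a and b *)
Definition opcost (q a b : nat) : nat := maxn (qdigits q a) (qdigits q b).

(* Table
   lookups are free; multiplication by q^m is a shift (free). *)
Definition table_cost (q k e : nat) : nat :=
  \sum_(1 <= a < k.+1) \sum_(1 <= h < e.+1) \sum_(0 <= s < (k * e).+1)
     opcost q (pbox a.-1 h s) (if a <= s then pbox a h.-1 (s - a) else 0).

Fixpoint algB_inner (fuel : nat) (q m e j Fprev sumPrev h l : nat)
  : nat * nat * nat :=
  match fuel with
  | 0 => (l, h, 0)
  | fuel'.+1 =>
      let a := Fprev - l in
      let sumF := sumPrev + a in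
      let N := if sumF <= m then pbox a (e - j) (m - sumF) else 0 in
      let c := opcost q sumPrev a + opcost q sumF m + opcost q h N in
      if N <= h then
        let: (l', h', c') := algB_inner fuel' q m e j Fprev sumPrev (h - N) l.+1 in
        (l', h', c + opcost q h N + c')
      else (l, h, c)
  end.

Fixpoint algB_outer (cnt : nat) (q m e j Fprev sumPrev h : nat) : seq nat * nat :=
  match cnt with
  | 0 => ([::], 0)
  | cnt'.+1 =>
      if sumPrev == m then
        let: (Fs, c) := algB_outer cnt' q m e j.+1 0 sumPrev h in
        (0 :: Fs, opcost q sumPrev m + c)
      else
        let: (lh, c1) := algB_inner Fprev.+1 q m e j Fprev sumPrev h 0 in
        let: (l, h') := lh in
        let Fj := Fprev - l in
        let: (Fs, c2) := algB_outer cnt' q m e j.+1 Fj (sumPrev + Fj) h' in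
        (Fj :: Fs, opcost q sumPrev m + c1 + opcost q sumPrev Fj + c2)
  end.

(* ind_m^{-1}(h) in the k x e box: the diagram (F_e, ..., F_1), with cost *)
Definition algB (q k e m h : nat) : seq nat * nat :=
  let: (Fs, c) := algB_outer e q m e 1 k 0 h in (rev Fs, c).

Definition qrep (q m r : nat) : seq nat :=
  [seq (r %/ q ^ t) %% q | t <- rev (iota 0 m)].

(* returns (Some (diagram, entries vector), cost) when it stops *)
Fixpoint algC_loop (cnt j : nat) (q k e ij : nat)
  : option (seq nat * seq nat) * nat :=
  match cnt with
  | 0 => (None, 0)
  | cnt'.+1 =>
      let m := k * e - j in
      let A := pbox k e m * q ^ m in          (* alpha_m q^m: lookup + shift *)
      let c0 := opcost q (k * e) j + opcost q ij A in
      if ij < A then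
        let t := ij %/ q ^ m in                 (* shift *)
        let r := ij - t * q ^ m in
        let: (F, cB) := algB q k e m t in
        (Some (F, qrep q m r), c0 + qdigits q ij + opcost q ij (t * q ^ m) + cB + m)
      else
        let: (res, c) := algC_loop cnt' j.+1 q k e (ij - A) in
        (res, c0 + opcost q ij A + c)
  end.

Definition algC (q n k i : nat) : option (seq nat * seq nat) * nat :=
  let e := n - k in
  let: (res, c) := algC_loop (k * e).+1 0 q k e i in
  (res, table_cost q k e + c).

From mathcomp Require Import ssreflect.
From Stdlib Require Import Reals Lra.

(** Algorithm C scans the blocks of size alpha_m q^m in the decomposition
  [n k]_q = \sum_s p(k, n-k, s) q^s, so it stops on every admissible index.
  Every number it compares, adds or subtracts (the index, the block sizes,
  the partition counts and the partial sums of Algorithm B) is below q^D with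
  D = 2k(n-k) + Y + 1, where 2^Y > binom(n, k) >= p(a, eta, s); so each
  operation costs at most D digit operations.  As binom(a+b, a) <= (6(b/a + 1))^a
  for a <= b, Y can be chosen with Y^2 <= 36 k(n-k).  Algorithm C makes
  O(k(n-k)) operations, Algorithm B O((n-k)(k+1)), and the partition table has
  about (k(n-k))^2 entries of Y digits, so the cost is O((k(n-k))^2 Y), whose
  square is O((k(n-k))^5). *)

Open Scope R_scope.

Lemma exp_pow (x : R) (n : nat) : exp x ^ n = exp (INR n * x).
Proof.
elim: n => [|n IH]; first by rewrite /= Rmult_0_l exp_0.
by rewrite S_INR /= IH -exp_plus; congr exp; lra.
Qed.

(* (1 + 1/x)^x <= e <= 3 *)
Lemma succ_pow_le (x : R) (n : nat) : 0 < x -> INR n = x ->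
  (x + 1) ^ n <= 3 * x ^ n.
Proof.
move=> x_gt0 xE.
have -> : x + 1 = x * (1 + / x) by field; lra.
rewrite Rpow_mult_distr Rmult_comm.
apply: Rmult_le_compat_r; first by apply: pow_le; lra.
apply: (Rle_trans _ (exp (/ x) ^ n)).
  apply: pow_incr; split; last exact: exp_ineq1_le.
  by have := Rinv_0_lt_compat _ x_gt0; lra.
by rewrite exp_pow xE Rinv_r; [exact: exp_le_3 | lra].
Qed.

Close Scope R_scope.

From mathcomp Require Import all_boot zify.
From Stdlib Require Import Lia.

Set Implicit Arguments.
Unset Strict Implicit.
Unset Printing Implicit Defensive.

Lemma INR_expn m n : INR (m ^ n) = pow (INR m) n.
Proof. by elim: n => [|n IH]; rewrite ?expn0 // expnS -multE mult_INR IH. Qed.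

Lemma expSn_le d : 0 < d -> d.+1 ^ d <= 3 * d ^ d.
Proof.
move=> d_gt0; apply/leP/INR_le.
rewrite -multE mult_INR !INR_expn S_INR.
have -> : INR 3 = IZR 3 by rewrite /=; lra.
by apply: succ_pow_le; first exact/lt_0_INR/ltP.
Qed.

Lemma expSS_le d : 0 < d -> d.+1 ^ d.+1 <= 6 * d ^ d.+1.
Proof.
move=> d_gt0; have d1_le : d.+1 <= 2 * d by lia.
rewrite !expnS; apply: (leq_trans (leq_mul d1_le (expSn_le d_gt0))).
by rewrite mulnACA.
Qed.

Lemma bin_mul_exp_le a b d : 'C(a + b, a) * d ^ b <= d.+1 ^ (a + b).
Proof.
have a_lt : a < (a + b).+1 by rewrite ltnS leq_addr.
rewrite -addn1 expnDn (bigD1 (Ordinal a_lt)) //= exp1n muln1 addKn.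
exact: leq_addr.
Qed.

Lemma binC_add a b : 'C(a + b, a) = 'C(a + b, b).
Proof. by rewrite -{2}(addnK b a) bin_sub // leq_addl. Qed.

(* With d = b %/ a, the bound d^b C(a+b,a) <= (d+1)^(a+b) loses at most
   (1 + 1/d)^((d+1) a) <= 6^a. *)
Lemma bin_le_exp a b : 0 < a -> a <= b -> 'C(a + b, a) <= (6 * (b %/ a).+1) ^ a.
Proof.
move=> a_gt0 le_ab; set d := b %/ a; set E := d.+1 * a.
have d_gt0 : 0 < d by rewrite divn_gt0.
have b_lt : b < E by exact: ltn_ceil.
have dE_gt0 : 0 < d ^ E by rewrite expn_gt0 d_gt0.
have E_split : E = b + (E - b) by rewrite subnKC // ltnW.
have dSE : d.+1 ^ E <= 6 ^ a * d ^ E.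
  by rewrite /E (expnM d.+1) (expnM d) -expnMn leq_exp2r // expSS_le.
rewrite -(leq_pmul2r dE_gt0); apply: (@leq_trans (d.+1 ^ (a + b) * d ^ (E - b))).
  by rewrite {1}E_split expnD mulnA leq_mul2r bin_mul_exp_le orbT.
apply: (@leq_trans (d.+1 ^ (a + b) * d.+1 ^ (E - b))).
  by rewrite leq_mul2l leq_exp2r ?subn_gt0 // leqnSn orbT.
by rewrite -expnD -addnA -E_split expnD expnMn [6 ^ a * _]mulnC -mulnA leq_mul2l dSE orbT.
Qed.

Lemma sqr_add5_le l : (l + 5) ^ 2 <= 36 * 2 ^ l.
Proof.
elim: l => [|l IH] //; rewrite (expnS 2 l) mulnCA.
apply: leq_trans (leq_mul (leqnn 2) IH); rewrite addSn.
have : 5 <= l + 5 by rewrite leq_addl.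
by move: (l + 5) => m; rewrite !expnS expn0 !muln1; nia.
Qed.

Lemma bin_digit_bound a b : 0 < a -> 0 < b ->
  exists Y, [/\ 0 < Y, 'C(a + b, a) < 2 ^ Y & Y ^ 2 <= 36 * (a * b)].
Proof.
move=> a_gt0 b_gt0; wlog le_ab : a b a_gt0 b_gt0 / a <= b => [hwlog|].
  case: (leqP a b) => [le_ab|/ltnW le_ba]; first exact: hwlog.
  by rewrite binC_add addnC (mulnC a); exact: (hwlog b a).
have := bin_le_exp a_gt0 le_ab; have := leq_divM b a.
have : 0 < b %/ a by rewrite divn_gt0.
move: (b %/ a) => d d_gt0 da_le bin_le.
set l := trunc_log 2 d.
have d_lt : d < 2 * 2 ^ l by rewrite -expnS trunc_log_ltn.
have d_ge : 2 ^ l <= d by exact: trunc_logP.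
exists ((l + 5) * a); split; first by rewrite muln_gt0 addn_gt0 orbT.
  apply: leq_ltn_trans bin_le _; rewrite expnM ltn_exp2r // expnD.
  by move: (2 ^ l) d_lt d_ge => X; lia.
rewrite expnMn; apply: (@leq_trans (36 * d * a ^ 2)).
  by rewrite leq_mul2r (leq_trans (sqr_add5_le l)) ?leq_mul2l ?d_ge ?orbT.
by rewrite -mulnA leq_mul2l expnS expn1 mulnCA leq_mul2l da_le !orbT.
Qed.

Lemma pboxSS a h s : pbox a.+1 h.+1 s =
  pbox a h.+1 s + (if a.+1 <= s then pbox a.+1 h (s - a.+1) else 0).
Proof. by []. Qed.

Lemma pbox_eq0 a h s : a * h < s -> pbox a h s = 0.
Proof.
elim: a h s => [|a IHa] h s; first by rewrite mul0n; case: s.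
elim: h s => [|h IHh] s; first by rewrite muln0; case: s.
move=> lt_s; rewrite pboxSS IHa; last by apply: leq_ltn_trans lt_s; rewrite leq_mul2r leqnSn orbT.
by case: ifP => // _; rewrite IHh // ltn_subRL -mulnS.
Qed.

Lemma pbox_le_bin a h s : pbox a h s <= 'C(a + h, a).
Proof.
elim: a h s => [|a IHa] h s; first by rewrite bin0; case: s.
elim: h s => [|h IHh] s; first by rewrite addn0 binn; case: s.
rewrite pboxSS addnS addSn binS addnC; apply: leq_add; last by rewrite -addnS.
by case: ifP => // _; rewrite -addSn.
Qed.

Lemma leq_bin_box a h k e : a <= k -> h <= e -> 'C(a + h, a) <= 'C(k + e, k).
Proof.
move=> le_ak le_he; apply: (@leq_trans 'C(a + e, a)); first by rewrite leq_bin2l ?leq_add2l.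
by rewrite binC_add (binC_add k) leq_bin2l ?leq_add2r.
Qed.

Definition box_genfun q a h := \sum_(s < (a * h).+1) pbox a h s * q ^ s.

Lemma box_genfun_widen q a h M : a * h < M ->
  \sum_(s < M) pbox a h s * q ^ s = box_genfun q a h.
Proof.
move=> lt_M; rewrite -(subnKC lt_M).
elim: (M - (a * h).+1) => [|r IH]; first by rewrite addn0.
by rewrite addnS big_ord_recr /= IH pbox_eq0 ?addn0 // ltnS leq_addr.
Qed.

Lemma sum_shift_exp q b (g : nat -> nat) M :
  \sum_(s < M + b) (if b <= s then g (s - b) else 0) * q ^ s =
  q ^ b * \sum_(t < M) g t * q ^ t.
Proof.
elim: M => [|M IH].
  by rewrite big_ord0 muln0 add0n big1 // => i _; rewrite leqNgt ltn_ord.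
rewrite addSn !big_ord_recr /= IH leq_addl addnK mulnDr expnD.
by rewrite mulnA [q ^ b * (_ * _)]mulnC.
Qed.

Lemma box_genfunSS q a h :
  box_genfun q a.+1 h.+1 = box_genfun q a h.+1 + q ^ a.+1 * box_genfun q a.+1 h.
Proof.
rewrite {1}/box_genfun; under eq_bigr do rewrite pboxSS mulnDl.
rewrite big_split /= box_genfun_widen; last by rewrite ltnS leq_mul2r leqnSn orbT.
congr (_ + _).
have -> : (a.+1 * h.+1).+1 = (a.+1 * h).+1 + a.+1 by rewrite mulnS addnC addSn.
by rewrite sum_shift_exp.
Qed.

Lemma box_genfun0n q h : box_genfun q 0 h = 1.
Proof. by rewrite /box_genfun mul0n big_ord1. Qed.

Lemma box_genfunn0 q a : box_genfun q a 0 = 1.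
Proof. by rewrite /box_genfun muln0 big_ord1; case: a. Qed.

Definition qprod q n := \prod_(i < n) (q ^ (n - i) - 1).

Lemma qprod0 q : qprod q 0 = 1.
Proof. by rewrite /qprod big_ord0. Qed.

Lemma qprodS q n : qprod q n.+1 = (q ^ n.+1 - 1) * qprod q n.
Proof. by rewrite /qprod big_ord_recl subn0. Qed.

Lemma qprod_gt0 q n : 1 < q -> 0 < qprod q n.
Proof.
move=> q_gt1; elim: n => [|n IH]; first by rewrite qprod0.
by rewrite qprodS muln_gt0 IH subn_gt0 andbT -[1](expn0 q) ltn_exp2l.
Qed.

Lemma box_genfun_qprod q k e : 0 < q ->
  box_genfun q k e * qprod q k * qprod q e = qprod q (k + e).
Proof.
move=> q_gt0; elim: k e => [|k IHk] e; first by rewrite box_genfun0n qprod0 !mul1n.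
elim: e => [|e IHe]; first by rewrite box_genfunn0 qprod0 addn0 muln1 mul1n.
(* q^(k+e+2) - 1 = (q^(k+1) - 1) + q^(k+1) (q^(e+1) - 1) glues the two
   induction hypotheses along the recurrence [box_genfunSS]. *)
have := IHk e.+1; move: IHe.
rewrite box_genfunSS !addSn !addnS (qprodS q k) (qprodS q e) (qprodS q (k + e).+1).
have -> : q ^ (k + e).+2 = q ^ k.+1 * q ^ e.+1 by rewrite -expnD addSn addnS.
have : 0 < q ^ k.+1 by rewrite expn_gt0 q_gt0.
have : 0 < q ^ e.+1 by rewrite expn_gt0 q_gt0.
move: (q ^ k.+1) (q ^ e.+1) (box_genfun q k e.+1) (box_genfun q k.+1 e).
move: (qprod q k) (qprod q e) (qprod q (k + e).+1) => Pk Pe P x y A B.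
nia.
Qed.

Lemma prod_top_qprod q k e :
  \prod_(i < k) (q ^ (k + e - i) - 1) * qprod q e = qprod q (k + e).
Proof.
elim: k => [|k IH]; first by rewrite big_ord0 mul1n.
by rewrite big_ord_recl subn0 addSn qprodS -IH mulnA.
Qed.

Lemma gauss_binom_box q k e : 1 < q -> gauss_binom q (k + e) k = box_genfun q k e.
Proof.
move=> q_gt1.
have top_eq : \prod_(i < k) (q ^ (k + e - i) - 1) = box_genfun q k e * qprod q k.
  apply/eqP; rewrite -(eqn_pmul2r (qprod_gt0 e q_gt1)) prod_top_qprod.
  by rewrite box_genfun_qprod // ltnW.
by rewrite /gauss_binom top_eq mulnK // qprod_gt0.
Qed.

Lemma algC_loop_stops q k e cnt j ij : j + cnt = (k * e).+1 ->
  ij < \sum_(s < cnt) pbox k e s * q ^ s -> (algC_loop cnt j q k e ij).1 != None.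
Proof.
elim: cnt j ij => [|cnt IH] j ij cnt_eq; first by rewrite big_ord0.
have m_eq : k * e - j = cnt by move: cnt_eq; lia.
rewrite big_ord_recr /= m_eq => ij_lt; case: ifP => [_|ij_ge].
  by case: (algB q k e cnt (ij %/ q ^ cnt)).
have := IH j.+1 (ij - pbox k e cnt * q ^ cnt).
case: (algC_loop cnt j.+1 q k e _) => res c /=; apply; first by rewrite addSnnS.
by rewrite ltn_subLR ?(addnC (_ * _)) // leqNgt ij_ge.
Qed.

Lemma qdigits_le q D x : 1 < q -> 0 < D -> x < q ^ D -> qdigits q x <= D.
Proof.
move=> q_gt1 D_gt0 x_lt; rewrite /qdigits; case: eqP => // /eqP x_neq0.
by rewrite -(ltn_exp2l _ _ q_gt1) (leq_ltn_trans _ x_lt) // trunc_logP // lt0n.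
Qed.

Lemma opcost_le q D a b : 1 < q -> 0 < D -> a < q ^ D -> b < q ^ D ->
  opcost q a b <= D.
Proof. by move=> q_gt1 D_gt0 a_lt b_lt; rewrite geq_max !qdigits_le. Qed.

Section DigitCost.

Variables q D : nat.
Hypotheses (q_gt1 : 1 < q) (D_gt0 : 0 < D).

Let qD_gt0 : 0 < q ^ D. Proof. by rewrite expn_gt0 ltnW. Qed.

Lemma algB_inner_cost m e j Fprev sumPrev fuel h l :
  sumPrev + Fprev < q ^ D -> m < q ^ D ->
  (forall a s, a <= Fprev -> pbox a (e - j) s < q ^ D) -> h < q ^ D ->
  (algB_inner fuel q m e j Fprev sumPrev h l).1.2 <= h /\
  (algB_inner fuel q m e j Fprev sumPrev h l).2 <= fuel * (4 * D).
Proof.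
move=> S_lt m_lt P_lt; elim: fuel h l => [|fuel IH] h l h_lt //=.
set a := Fprev - l; set N := (if _ <= m then _ else 0).
have a_le : a <= Fprev := leq_subr _ _.
have cost_a : opcost q sumPrev a <= D.
  apply: opcost_le => //; apply: leq_ltn_trans S_lt; first exact: leq_addr.
  exact: leq_trans a_le (leq_addl _ _).
have cost_m : opcost q (sumPrev + a) m <= D.
  by apply: opcost_le => //; apply: leq_ltn_trans S_lt; rewrite leq_add2l.
have cost_N : opcost q h N <= D.
  by apply: opcost_le => //; rewrite /N; case: ifP => // _; exact: P_lt.
case: ifP => N_le /=; last by split => //; rewrite mulSn; lia.
have := IH (h - N) l.+1 (leq_ltn_trans (leq_subr _ _) h_lt).
case: (algB_inner fuel _ _ _ _ _ _ _ _) => [[l' h'] c'] /= [h'_le c'_le].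
split; first exact: leq_trans h'_le (leq_subr _ _).
by rewrite mulSn; lia.
Qed.

Lemma algB_outerS cnt m e j Fprev sumPrev h :
  algB_outer cnt.+1 q m e j Fprev sumPrev h =
  if sumPrev == m then
    let: (Fs, c) := algB_outer cnt q m e j.+1 0 sumPrev h in
    (0 :: Fs, opcost q sumPrev m + c)
  else
    let: (lh, c1) := algB_inner Fprev.+1 q m e j Fprev sumPrev h 0 in
    let: (l, h') := lh in
    let: (Fs, c2) := algB_outer cnt q m e j.+1 (Fprev - l) (sumPrev + (Fprev - l)) h' in
    (Fprev - l :: Fs, opcost q sumPrev m + c1 + opcost q sumPrev (Fprev - l) + c2).
Proof. by []. Qed.

Lemma algB_outer_cost m e k N cnt j Fprev sumPrev h :
  m < q ^ D -> N < q ^ D ->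
  (forall a h s, a <= k -> h <= e -> pbox a h s < q ^ D) ->
  Fprev <= k -> sumPrev + cnt * k <= N -> h < q ^ D ->
  (algB_outer cnt q m e j Fprev sumPrev h).2 <= cnt * (k.+1 * (4 * D) + 2 * D).
Proof.
move=> m_lt N_lt P_lt.
elim: cnt j Fprev sumPrev h => [|cnt IH] j Fprev sumPrev h // F_le S_le h_lt.
have S_lt : sumPrev + k < q ^ D.
  by apply: leq_ltn_trans N_lt; apply: leq_trans S_le; rewrite mulSn leq_add2l leq_addr.
have S'_le : sumPrev + cnt * k <= N by move: S_le; rewrite mulSn; lia.
have cost_m : opcost q sumPrev m <= D.
  by apply: opcost_le => //; apply: leq_ltn_trans S_lt; exact: leq_addr.
rewrite algB_outerS mulSn; case: ifP => _.
  have := IH j.+1 0 sumPrev h (leq0n _) S'_le h_lt.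
  by case: (algB_outer cnt _ _ _ _ _ _ _) => Fs c /= c_le; lia.
have SF_lt : sumPrev + Fprev < q ^ D by apply: leq_ltn_trans S_lt; rewrite leq_add2l.
have PF_lt a s : a <= Fprev -> pbox a (e - j) s < q ^ D.
  by move=> a_le; apply: P_lt; [exact: leq_trans F_le | exact: leq_subr].
have := algB_inner_cost Fprev.+1 0 SF_lt m_lt PF_lt h_lt.
case: (algB_inner _ _ _ _ _ _ _ _ _) => [[l h'] c1] /= [h'_le c1_le].
have Fj_le : Fprev - l <= k by exact: leq_trans (leq_subr _ _) F_le.
have SFj_le : sumPrev + (Fprev - l) + cnt * k <= N by move: S_le; rewrite mulSn; lia.
have := IH j.+1 _ _ h' Fj_le SFj_le (leq_ltn_trans h'_le h_lt).
case: (algB_outer cnt _ _ _ _ _ _ _) => Fs c2 /= c2_le.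
have cost_Fj : opcost q sumPrev (Fprev - l) <= D.
  apply: opcost_le => //; apply: leq_ltn_trans S_lt; first exact: leq_addr.
  exact: leq_trans Fj_le (leq_addl _ _).
have c1_le' : c1 <= k.+1 * (4 * D) by apply: leq_trans c1_le _; rewrite leq_mul2r ltnS F_le orbT.
lia.
Qed.

Lemma algB_cost k e m t : m < q ^ D -> k * e < q ^ D ->
  (forall a h s, a <= k -> h <= e -> pbox a h s < q ^ D) -> t < q ^ D ->
  (algB q k e m t).2 <= e * (k.+1 * (4 * D) + 2 * D).
Proof.
move=> m_lt N_lt P_lt t_lt; have S_le : 0 + e * k <= k * e by rewrite mulnC.
have := algB_outer_cost 1 m_lt N_lt P_lt (leqnn k) S_le t_lt.
by rewrite /algB; case: (algB_outer _ _ _ _ _ _ _ _).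
Qed.

Lemma algC_loopS cnt j k e ij : algC_loop cnt.+1 j q k e ij =
  let m := k * e - j in
  let A := pbox k e m * q ^ m in
  let c0 := opcost q (k * e) j + opcost q ij A in
  if ij < A then
    let t := ij %/ q ^ m in
    let: (F, cB) := algB q k e m t in
    (Some (F, qrep q m (ij - t * q ^ m)), c0 + qdigits q ij + opcost q ij (t * q ^ m) + cB + m)
  else
    let: (res, c) := algC_loop cnt j.+1 q k e (ij - A) in
    (res, c0 + opcost q ij A + c).
Proof. by []. Qed.

Lemma algC_loop_cost k e cnt j ij : k * e < q ^ D ->
  (forall a h s, a <= k -> h <= e -> pbox a h s < q ^ D) ->
  (forall m, m <= k * e -> pbox k e m * q ^ m < q ^ D) ->
  j + cnt <= (k * e).+1 -> ij < q ^ D ->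
  (algC_loop cnt j q k e ij).2 <=
    cnt * (3 * D) + (3 * D + k * e + e * (k.+1 * (4 * D) + 2 * D)).
Proof.
move=> N_lt P_lt A_lt; elim: cnt j ij => [|cnt IH] j ij // j_le ij_lt.
rewrite algC_loopS /= mulSn; set m := k * e - j.
have m_le : m <= k * e := leq_subr _ _.
have cost_j : opcost q (k * e) j <= D.
  by apply: opcost_le => //; apply: leq_ltn_trans N_lt; move: j_le; lia.
have cost_A : opcost q ij (pbox k e m * q ^ m) <= D by rewrite opcost_le ?A_lt.
case: ifP => _.
  have t_lt : ij %/ q ^ m < q ^ D by apply: leq_ltn_trans ij_lt; exact: leq_div.
  have := algB_cost (leq_ltn_trans m_le N_lt) N_lt P_lt t_lt.
  case: (algB _ _ _ _ _) => F cB /= cB_le.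
  have cost_ij : qdigits q ij <= D by exact: qdigits_le.
  have cost_t : opcost q ij (ij %/ q ^ m * q ^ m) <= D.
    by apply: opcost_le => //; apply: leq_ltn_trans ij_lt; exact: leq_divM.
  lia.
have j'_le : j.+1 + cnt <= (k * e).+1 by rewrite addSnnS.
have := IH j.+1 (ij - pbox k e m * q ^ m) j'_le (leq_ltn_trans (leq_subr _ _) ij_lt).
by case: (algC_loop cnt _ _ _ _ _) => res c /= c_le; lia.
Qed.

Lemma table_cost_le k e : (forall a h s, a <= k -> h <= e -> pbox a h s < q ^ D) ->
  table_cost q k e <= k * (e * ((k * e).+1 * D)).
Proof.
move=> P_lt.
apply: (@leq_trans (\sum_(1 <= a < k.+1) \sum_(1 <= h < e.+1) \sum_(0 <= s < (k * e).+1) D)).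
  rewrite /table_cost big_nat_cond [X in _ <= X]big_nat_cond.
  apply: leq_sum => a /andP[/andP[_ a_lt] _].
  rewrite big_nat_cond [X in _ <= X]big_nat_cond.
  apply: leq_sum => h /andP[/andP[_ h_lt] _]; apply: leq_sum => s _.
  by apply: opcost_le => //; [|case: ifP => // _]; apply: P_lt; lia.
by rewrite !sum_nat_const_nat !subn1 subn0.
Qed.

End DigitCost.

Lemma algC_stops q k e i : i < box_genfun q k e -> (algC q (k + e) k i).1 != None.
Proof.
move=> i_lt; have := algC_loop_stops (add0n _) i_lt.
by rewrite /algC addKn; case: (algC_loop _ _ _ _ _ _).
Qed.

Lemma prime_power_gt1 q : prime_power q -> 1 < q.
Proof.
move=> [p [r [p_prime [r_gt0 ->]]]]; apply: (leq_trans (prime_gt1 p_prime)).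
by rewrite -{1}(expn1 p); apply: leq_pexp2l => //; exact: prime_gt0.
Qed.

Section DigitBudget.

Variables q k e Y : nat.
Hypotheses (q_gt1 : 1 < q) (Y_gt0 : 0 < Y) (bin_lt : 'C(k + e, k) < 2 ^ Y).

Let N := k * e.
Let D := 2 * N + Y + 1.

Let leq_qexp a b : a <= b -> q ^ a <= q ^ b.
Proof. exact/leq_pexp2l/ltnW. Qed.

Lemma pbox_lt_qY a h s : a <= k -> h <= e -> pbox a h s < q ^ Y.
Proof.
move=> le_ak le_he; rewrite (leq_ltn_trans (pbox_le_bin a h s)) //.
rewrite (leq_ltn_trans (leq_bin_box le_ak le_he)) //.
by rewrite (leq_trans bin_lt) // leq_exp2r.
Qed.

Let pbox_lt_qD a h s : a <= k -> h <= e -> pbox a h s < q ^ D.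
Proof.
by move=> le_ak le_he; apply: leq_trans (pbox_lt_qY s le_ak le_he) (leq_qexp _); rewrite /D; lia.
Qed.

Let N_lt_qD : N < q ^ D.
Proof. by apply: leq_trans (ltn_expl N q_gt1) (leq_qexp _); rewrite /D; lia. Qed.

Let alpha_lt_qD m : m <= N -> pbox k e m * q ^ m < q ^ D.
Proof.
move=> le_mN; apply: (@leq_trans (q ^ Y * q ^ m)).
  by rewrite ltn_pmul2r ?expn_gt0 ?(ltnW q_gt1) // pbox_lt_qY.
by rewrite -expnD; apply: leq_qexp; rewrite /D; lia.
Qed.

Lemma box_genfun_lt_qD : box_genfun q k e < q ^ D.
Proof.
apply: (@leq_ltn_trans (\sum_(s < N.+1) q ^ (Y + N))).
  apply: leq_sum => s _; rewrite expnD; apply: leq_mul; first exact/ltnW/pbox_lt_qY.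
  by apply: leq_qexp; rewrite -ltnS.
rewrite sum_nat_const card_ord; apply: (@leq_ltn_trans (q ^ N * q ^ (Y + N))).
  by rewrite leq_mul2r ltn_expl ?orbT.
by rewrite -expnD ltn_exp2l // /D; lia.
Qed.

Lemma algC_cost_le i : 0 < k -> 0 < e -> Y ^ 2 <= 36 * N -> i < q ^ D ->
  (algC q (k + e) k i).2 <= 175 * (N * N * Y).
Proof.
move=> k_gt0 e_gt0 Y_sqr_le i_lt; have D_gt0 : 0 < D by rewrite /D addn1.
have := algC_loop_cost (cnt := N.+1) (j := 0) q_gt1 D_gt0 N_lt_qD pbox_lt_qD alpha_lt_qD
  (leqnn _) i_lt.
have := table_cost_le q_gt1 Y_gt0 pbox_lt_qY.
rewrite /algC addKn -/N; case: (algC_loop _ _ _ _ _ _) => res c /= table_le loop_le.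
rewrite mulnA -/N in table_le.
have N_gt0 : 0 < N by rewrite muln_gt0 k_gt0.
have Y_le : Y <= 6 * N by move: Y_sqr_le; clear -N_gt0; nia.
have D_le : D <= 9 * N by rewrite /D; lia.
have e_le : e <= N by rewrite /N leq_pmull.
have ek_le : e * k.+1 <= 2 * N by rewrite /N; clear -k_gt0; nia.
clearbody D N.
have NN_le : N * N <= N * N * Y by rewrite leq_pmulr.
have table_le' : N * (N.+1 * Y) <= 2 * (N * N * Y) by clear -N_gt0; nia.
have scan_le : N.+1 * (3 * D) <= 54 * (N * N) by clear -N_gt0 D_le; nia.
have stop_le : 3 * D + N <= 28 * (N * N) by clear -N_gt0 D_le; nia.
have inner_le : e * (k.+1 * (4 * D)) <= 72 * (N * N) by clear -ek_le D_le; nia.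
have outer_le : e * (2 * D) <= 18 * (N * N) by clear -e_le D_le; nia.
rewrite mulnDr in loop_le; lia.
Qed.

End DigitBudget.

Lemma sqr_cost_le T N Y : T <= 175 * (N * N * Y) -> Y ^ 2 <= 36 * N ->
  T ^ 2 <= 175 * 175 * 36 * N ^ 5.
Proof.
move=> T_le Y_sqr; apply: (leq_trans (leq_mul T_le T_le)).
have -> : 175 * (N * N * Y) * (175 * (N * N * Y)) = 175 * 175 * (N ^ 4 * Y ^ 2).
  by rewrite !expnS expn0; lia.
have -> : 175 * 175 * 36 * N ^ 5 = 175 * 175 * (N ^ 4 * (36 * N)).
  by rewrite !expnS expn0; lia.
by rewrite !leq_mul2l Y_sqr !orbT.
Qed.

Theorem theorem10 (q : nat) (Hq : prime_power q) :
  exists C : nat, forall n k i : nat,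
    0 < k < n -> i < gauss_binom q n k ->
    (algC q n k i).1 != None /\
    (algC q n k i).2 ^ 2 <= C * (k * (n - k)) ^ 5.
Proof.
have q_gt1 := prime_power_gt1 Hq.
exists (175 * 175 * 36) => n k i /andP[k_gt0 lt_kn] i_lt.
have [e e_gt0 n_eq] : exists2 e, 0 < e & n = k + e.
  by exists (n - k); rewrite ?subn_gt0 ?subnKC // ltnW.
subst n.
rewrite gauss_binom_box // in i_lt; rewrite addKn.
have [Y [Y_gt0 bin_lt Y_sqr_le]] := bin_digit_bound k_gt0 e_gt0.
split; first exact: algC_stops.
apply: (sqr_cost_le _ Y_sqr_le); apply: algC_cost_le => //.
exact: ltn_trans i_lt (box_genfun_lt_qD q_gt1 Y_gt0 bin_lt).
Qed.
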